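(* Fix $k\ge2$ and $0<\theta<1$. Let $f_d:\{0,1\}^{m_d}\to\{0,1\}^{L_d}$ be a family of functions computable by $\mathbf{NC}^0$ circuits, let $W_1,\dots,W_{m_d}$ be independent uniform random bits, and let $X'=f_d(W)$. Then the total variation distance between the distributions of $X'$ and $X^{(d)}$ is $\Omega(1)$ as $d\to\infty$.
   Context: Broadcast (Ising) tree model: complete $k$-ary tree of depth $d$; $L_d$ = leaves; $\sigma_\rho$ uniform on $\{0,1\}$; each child $v$ of $u$ independently has $\sigma_v=\sigma_u$ with probability $(1+\theta)/2$ and $1-\sigma_u$ otherwise; $X^{(d)}=(\sigma_v)_{v\in L_d}$. An $\mathbf{NC}^0$ circuit family is one in which each output bit depends on at most a constant number $c$ (independent of $d$) of input bits. *)

From HB Require Import structures.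
From mathcomp Require Import all_boot all_order all_algebra.
From mathcomp Require Import reals.
Set Implicit Arguments. Unset Strict Implicit. Unset Printing Implicit Defensive.
Import Order.TTheory GRing.Theory Num.Theory.
Local Open Scope ring_scope.

(* Complete k-ary tree of depth d: a vertex at depth j (0 <= j <= d) is the
   path j.-tuple 'I_k from the root; the root is the empty tuple at depth 0,
   the children of t at depth j < d are rcons t i, i : 'I_k.
   Leaves L_d = vertices at depth d = d.-tuple 'I_k. *)
Definition vert (k d : nat) := {j : 'I_d.+1 & j.-tuple 'I_k}.

Definition vin k d (j : 'I_d) (t : j.-tuple 'I_k) : vert k d :=
  existT (fun j : 'I_d.+1 => j.-tuple 'I_k) (widen_ord (leqnSn d) j) t.

Definition vchild k d (j : 'I_d) (t : j.-tuple 'I_k) (i : 'I_k) : vert k d :=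
  existT (fun j : 'I_d.+1 => j.-tuple 'I_k) (@Ordinal d.+1 j.+1 (ltn_ord j))
    [tuple of rcons t i].

Definition vleaf k d (t : d.-tuple 'I_k) : vert k d :=
  existT (fun j : 'I_d.+1 => j.-tuple 'I_k) ord_max t.

Definition bweight (R : realType) (theta : R) (a b : bool) : R :=
  if a == b then (1 + theta) / 2 else (1 - theta) / 2.

(* joint law of the broadcast process on all vertices: root uniform on {0,1},
   each edge independently *)
Definition bjoint (R : realType) (theta : R) k d (s : {ffun vert k d -> bool}) : R :=
  2^-1 * \prod_(j < d) \prod_(t : j.-tuple 'I_k) \prod_(i < k)
           bweight theta (s (vin t)) (s (vchild t i)).

(* law of X^(d) = (sigma_v)_{v in L_d} *)
Definition leafLaw (R : realType) (theta : R) k d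
    (x : {ffun d.-tuple 'I_k -> bool}) : R :=
  \sum_(s : {ffun vert k d -> bool} | [forall t, s (vleaf t) == x t])
     bjoint theta s.

Definition pushLaw (R : realType) (m : nat) (T : finType)
    (f : {ffun 'I_m -> bool} -> T) (x : T) : R :=
  #|[set w | f w == x]|%:R / (2 ^+ m).

Definition tvdist (R : realType) (T : finType) (P Q : T -> R) : R :=
  2^-1 * \sum_(x : T) `|P x - Q x|.

(* NC^0 locality: every output bit depends on at most c input bits *)
Definition local_c (m : nat) (O : finType) (c : nat)
    (f : {ffun 'I_m -> bool} -> {ffun O -> bool}) : Prop :=
  forall o : O, exists S : {set 'I_m}, (#|S| <= c)%N /\
    forall w w' : {ffun 'I_m -> bool},
      (forall i, i \in S -> w i = w' i) -> f w o = f w' o.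

(* Take two leaves [a] and [b] whose lowest common ancestor lies [h] levels
   above them. In the coordinates e_v = s_v xor s_(parent v) the broadcast
   process is a product of independent bits, each equal to 1 with probability
   (1 - θ)/2, and x_a xor x_b is the xor of the 2h flips below the common
   ancestor; hence x_a = x_b with probability (1 + θ^(2h))/2. For X' = f(W),
   the event x_a = x_b depends on at most 2c input bits, so its probability is
   a multiple of 2^-(2c). Fixing h with 0 < θ^(2h) <= 2^-(2c)/2, the two
   probabilities differ by at least θ^(2h)/2 for every d >= h, so the total
   variation distance is at least θ^(2h)/4. *)

From HB Require Import structures.
From mathcomp Require Import all_boot all_order all_algebra.
From mathcomp Require Import reals.
From mathcomp Require Import zify ring lra.
Set Implicit Arguments. Unset Strict Implicit. Unset Printing Implicit Defensive.
Import Order.TTheory GRing.Theory Num.Theory.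
Local Open Scope ring_scope.

Section EdgeFlip.
Variables (V : finType) (root : V) (par : V -> V) (dep : V -> nat).
Hypothesis dep_par : forall v, v != root -> (dep (par v) < dep v)%N.

Definition edge_flip (s : {ffun V -> bool}) : {ffun V -> bool} :=
  [ffun v => if v == root then s v else s v (+) s (par v)].

Lemma edge_flip_inj : injective edge_flip.
Proof.
move=> s s' eq_flip; apply/ffunP => v.
have [n] := ubnP (dep v); elim: n v => // n IHn v /ltnSE dep_v.
have := congr1 (fun g : {ffun V -> bool} => g v) eq_flip; rewrite !ffunE.
case: eqP => [_ //|/eqP v_root].
by rewrite (IHn (par v) (leq_trans (dep_par v_root) dep_v)) => /addIb.
Qed.

Lemma sign_edge_flip_path (R : comNzRingType) (s : {ffun V -> bool}) (u : nat -> V) n :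
    u 0%N = root ->
    (forall i, (i < n)%N -> u i.+1 != root /\ par (u i.+1) = u i) ->
  (-1) ^+ s (u n) = \prod_(i < n.+1) (-1) ^+ edge_flip s (u i) :> R.
Proof.
move=> u0 u_path; elim: n u_path => [|n IHn] u_path.
  by rewrite big_ord1 ffunE u0 eqxx.
have [u_root u_par] := u_path n (ltnSn n).
rewrite big_ord_recr /= -IHn => [|i lt_in]; last exact/u_path/ltnW.
rewrite ffunE (negbTE u_root) u_par signr_addb.
by rewrite [X in _ * X]mulrC signrMK.
Qed.

End EdgeFlip.

Lemma sum_ffun_prod_sign (R : comNzRingType) (V : finType) (W : V -> bool -> R)
    (theta : R) (A : {set V}) :
    (forall v, W v false + W v true = 1) ->
    (forall v, v \in A -> W v false - W v true = theta) ->
  \sum_(e : {ffun V -> bool}) \prod_v W v (e v) * \prod_(v in A) (-1) ^+ e v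
    = theta ^+ #|A|.
Proof.
move=> W_sum W_bias.
under eq_bigr do rewrite [\prod_(v in A) _]big_mkcond -big_split /=.
rewrite -(bigA_distr_bigA (fun v b => W v b * (if v \in A then (-1) ^+ b else 1))).
rewrite -prodr_const [RHS]big_mkcond; apply: eq_bigr => v _.
rewrite big_bool /=; case: ifP => [/W_bias <-|_]; last by rewrite !mulr1 addrC.
by rewrite expr1 expr0 mulr1 mulrN1 addrC.
Qed.

Lemma big_tuple_rcons (R : Type) (idx : R) (op : Monoid.com_law idx)
    (T : finType) n (F : n.+1.-tuple T -> R) :
  \big[op/idx]_(t : n.+1.-tuple T) F t =
  \big[op/idx]_(t : n.-tuple T) \big[op/idx]_(i : T) F [tuple of rcons t i].
Proof.
rewrite pair_big /=.
have rcons_inj : injective (fun p : n.-tuple T * T => [tuple of rcons p.1 p.2]).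
  move=> [t x] [t' y] /(congr1 val) /= /eqP.
  by rewrite eqseq_rcons => /andP[/eqP/val_inj -> /eqP ->].
rewrite (reindex _ (onW_bij _ (inj_card_bij rcons_inj _))) //.
by rewrite card_prod !card_tuple expnS mulnC.
Qed.

Lemma big_fibers (R : Type) (idx : R) (op : Monoid.com_law idx)
    (S X : finType) (p : S -> X) (E : pred X) (F : S -> R) :
  \big[op/idx]_(x | E x) \big[op/idx]_(s | p s == x) F s =
  \big[op/idx]_(s | E (p s)) F s.
Proof.
rewrite [RHS](partition_big p E) //; apply: eq_bigr => x Ex.
by apply: eq_bigl => s; case: eqP => [->|]; rewrite ?Ex ?andbF.
Qed.

Lemma size_take_tuple (T : Type) n (t : n.-tuple T) j :
  (j <= n)%N -> size (take j t) == j.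
Proof. by move=> le_jn; rewrite size_takel ?size_tuple. Qed.

Section TreeVertices.
Variables k d : nat.
Implicit Types (v w : vert k d) (t : d.-tuple 'I_k).

Definition vdep v : nat := tag v.
Definition vseq v : seq 'I_k := tagged v.

Lemma vert_eq v w : vdep v = vdep w -> vseq v = vseq w -> v = w.
Proof.
case: v w => -[j lt_j] t [[j' lt_j'] t']; rewrite /vdep /vseq /= => eq_j.
by subst j'; rewrite (bool_irrelevance lt_j' lt_j) => /val_inj ->.
Qed.

Definition vroot : vert k d := existT _ ord0 [tuple].

Definition vpar v : vert k d :=
  let: existT j t := v in
  existT (fun j : 'I_d.+1 => j.-tuple 'I_k)
    (Ordinal (leq_ltn_trans (leq_pred j) (ltn_ord j)))
    (Tuple (size_take_tuple t (leq_pred j))).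

(* Junk value [vroot] for [n > d], where [inord n = ord0]. *)
Definition vprefix t (n : nat) : vert k d :=
  let j : 'I_d.+1 := inord n in
  existT (fun j : 'I_d.+1 => j.-tuple 'I_k) j (Tuple (size_take_tuple t (ltn_ord j))).

Lemma vdep_par v : v != vroot -> (vdep (vpar v) < vdep v)%N.
Proof.
case: v => -[[|j] lt_j] t //= /eqP[]; apply: vert_eq => //=.
by rewrite /vseq /= (tuple0 t).
Qed.

Lemma vpar_child (j : 'I_d) (t : j.-tuple 'I_k) (i : 'I_k) :
  vpar (vchild t i) = vin t.
Proof. by apply: vert_eq; rewrite //= /vseq /= -cats1 take_size_cat ?size_tuple. Qed.

Lemma vchild_neq_root (j : 'I_d) (t : j.-tuple 'I_k) (i : 'I_k) :
  vchild t i != vroot.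
Proof. by apply/eqP => /(congr1 vdep). Qed.

Lemma vdep_prefix t n : (n <= d)%N -> vdep (vprefix t n) = n.
Proof. by move=> le_nd; rewrite /vdep /= inordK. Qed.

Lemma vseq_prefix t n : (n <= d)%N -> vseq (vprefix t n) = take n t.
Proof. by move=> le_nd; rewrite /vseq /= inordK. Qed.

Lemma vprefix0 t : vprefix t 0 = vroot.
Proof. by apply: vert_eq; rewrite ?vdep_prefix ?vseq_prefix ?take0. Qed.

Lemma vprefix_leaf t : vprefix t d = vleaf t.
Proof.
by apply: vert_eq; rewrite ?vdep_prefix ?vseq_prefix // take_oversize ?size_tuple.
Qed.

Lemma vpar_prefix t n : (n < d)%N -> vpar (vprefix t n.+1) = vprefix t n.
Proof.
move=> lt_nd; apply: vert_eq.
  by rewrite (vdep_prefix _ (ltnW lt_nd)) /vdep /= inordK.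
by rewrite (vseq_prefix _ (ltnW lt_nd)) /vseq /= inordK // take_takel.
Qed.

Lemma vprefix_neq_root t n : (n < d)%N -> vprefix t n.+1 != vroot.
Proof. by move=> lt_nd; apply/eqP => /(congr1 vdep); rewrite vdep_prefix. Qed.

Lemma big_vert (R : Type) (idx : R) (op : Monoid.com_law idx) (F : vert k d -> R) :
  \big[op/idx]_v F v =
  \big[op/idx]_(j : 'I_d.+1) \big[op/idx]_(t : j.-tuple 'I_k) F (existT _ j t).
Proof.
rewrite (sig_big_dep (J := fun j : 'I_d.+1 => j.-tuple 'I_k) xpredT (fun _ _ => true)).
by apply: eq_bigr => -[].
Qed.

End TreeVertices.

Definition vweight (R : realType) (theta : R) k d (v : vert k d) (b : bool) : R :=
  if v == vroot k d then 2^-1 else bweight theta false b.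

Definition vflip k d := @edge_flip (vert k d) (vroot k d) (@vpar k d).

Lemma bweight_addb (R : realType) (theta : R) a b :
  bweight theta a b = bweight theta false (b (+) a).
Proof. by case: a; case: b. Qed.

Lemma bjoint_flip (R : realType) (theta : R) k d (s : {ffun vert k d -> bool}) :
  bjoint theta s = \prod_v vweight theta v (vflip s v).
Proof.
rewrite big_vert big_ord_recl /bjoint; congr (_ * _).
  rewrite (big_pred1 [tuple]) => [|t]; last exact/esym/eqP/tuple0.
  by rewrite /vweight eqxx.
apply: eq_bigr => j _; symmetry.
pose vj (t : j.+1.-tuple 'I_k) : vert k d := existT _ (lift ord0 j) t.
rewrite (big_tuple_rcons _ (fun t => vweight theta (vj t) (vflip s (vj t)))).
apply: eq_bigr => t _; apply: eq_bigr => i _.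
have -> : vj [tuple of rcons t i] = vchild t i by apply: vert_eq.
rewrite /vflip /edge_flip ffunE /vweight (negbTE (vchild_neq_root t i)).
by rewrite vpar_child -bweight_addb.
Qed.

Definition leaves k d (s : {ffun vert k d -> bool}) : {ffun d.-tuple 'I_k -> bool} :=
  [ffun t => s (vleaf t)].

Lemma leafLaw_event (R : realType) (theta : R) k d
    (E : pred {ffun d.-tuple 'I_k -> bool}) :
  \sum_(x | E x) leafLaw theta x = \sum_(s | E (leaves s)) bjoint theta s.
Proof.
rewrite -(big_fibers _ (@leaves k d)); apply: eq_bigr => x _; apply: eq_bigl => s.
apply/forallP/eqP => [s_x|<- t]; last by rewrite ffunE.
by apply/ffunP => t; rewrite ffunE; apply/eqP.
Qed.

Lemma sign_leaf (R : comNzRingType) k d (s : {ffun vert k d -> bool})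
    (t : d.-tuple 'I_k) :
  (-1) ^+ s (vleaf t) = \prod_(i < d.+1) (-1) ^+ vflip s (vprefix t i) :> R.
Proof.
rewrite -vprefix_leaf; apply: sign_edge_flip_path; first exact: vprefix0.
by move=> i lt_id; rewrite vprefix_neq_root ?vpar_prefix.
Qed.

Section LeafPair.
Variables (k d p : nat) (a b : d.-tuple 'I_k).
Hypotheses (eq_below : take p a = take p b) (neq_at : take p.+1 a != take p.+1 b).

Lemma lca_depth_lt : (p < d)%N.
Proof.
rewrite ltnNge; apply: contra neq_at => le_dp.
by move: eq_below; rewrite !take_oversize ?size_tuple ?(leqW le_dp) // => ->.
Qed.

Lemma vprefix_eq_below n : (n <= p)%N -> vprefix a n = vprefix b n.
Proof.
move=> le_np; have le_nd := leq_trans le_np (ltnW lca_depth_lt).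
apply: vert_eq; first by rewrite !vdep_prefix.
by rewrite !vseq_prefix // -(take_takel a le_np) eq_below take_takel.
Qed.

Lemma vprefix_neq_above n n' : (p < n)%N -> (n <= d)%N -> (n' <= d)%N ->
  vprefix a n != vprefix b n'.
Proof.
move=> lt_pn le_nd le_n'd; apply/eqP => eq_ab.
have eq_nn' : n = n' by rewrite -(vdep_prefix a le_nd) -(vdep_prefix b le_n'd) eq_ab.
move: eq_ab neq_at => /(congr1 (@vseq k d)); rewrite -eq_nn' !vseq_prefix // => eq_ab.
by rewrite -(take_takel a lt_pn) eq_ab take_takel ?eqxx.
Qed.

Definition lca_branch (i : 'I_(d - p) * bool) : vert k d :=
  vprefix (if i.2 then b else a) (i.1 + p.+1).

Lemma lca_branch_depth (x : 'I_(d - p)) : (x + p.+1 <= d)%N.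
Proof. by have := ltn_ord x; have := lca_depth_lt; lia. Qed.

Lemma lca_branch_inj : injective lca_branch.
Proof.
move=> [x q] [x' q'] /= eq_xq.
have := congr1 (@vdep k d) eq_xq; rewrite !vdep_prefix ?lca_branch_depth // => /addIn.
move=> /val_inj /= eq_x; subst x'; congr pair.
have lt_px : (p < x + p.+1)%N by rewrite addnS ltnS leq_addl.
have neq_ab := vprefix_neq_above lt_px (lca_branch_depth x) (lca_branch_depth x).
case: q q' eq_xq => -[] //; rewrite /lca_branch /= => eq_ab.
  by rewrite eq_ab eqxx in neq_ab.
by rewrite eq_ab eqxx in neq_ab.
Qed.

(* The vertices strictly below the lowest common ancestor (at depth [p]) of
   the leaves [a] and [b], on the paths towards them. *)
Definition lca_paths : {set vert k d} := lca_branch @: setT.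

Lemma card_lca_paths : #|lca_paths| = (2 * (d - p))%N.
Proof.
rewrite card_imset ?cardsT ?card_prod ?card_ord ?card_bool 1?mulnC //.
exact: lca_branch_inj.
Qed.

Lemma vroot_notin_lca_paths : vroot k d \notin lca_paths.
Proof.
apply/imsetP => -[[x q] _ /(congr1 (@vdep k d))].
by rewrite vdep_prefix ?lca_branch_depth // addnS.
Qed.

Lemma sign_leaf_pair (R : comNzRingType) (s : {ffun vert k d -> bool}) :
  (-1) ^+ s (vleaf a) * (-1) ^+ s (vleaf b) =
  \prod_(v in lca_paths) (-1) ^+ vflip s v :> R.
Proof.
rewrite !sign_leaf -big_split /=.
rewrite -(big_mkord xpredT
  (fun i => (-1) ^+ vflip s (vprefix a i) * (-1) ^+ vflip s (vprefix b i))).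
rewrite (big_cat_nat (n := p.+1)) //=; last exact: ltnW lca_depth_lt.
rewrite big_nat_cond big1 ?mul1r => [|i /andP[/andP[_ le_ip] _]]; last first.
  by rewrite vprefix_eq_below // -expr2 sqrr_sign.
rewrite -{1}[p.+1]add0n big_addn subSS big_mkord.
rewrite big_imset /=; last exact: in2W lca_branch_inj.
rewrite (eq_bigr (fun x => \prod_(q : bool) (-1) ^+ vflip s (lca_branch (x, q))))
  => [|x _].
  by rewrite pair_big; apply: eq_big => [i|[]]; rewrite ?inE.
by rewrite big_bool mulrC.
Qed.

Lemma leafLaw_agree (R : realType) (theta : R) :
  \sum_(x : {ffun d.-tuple 'I_k -> bool} | x a == x b) leafLaw theta x =
    (1 + theta ^+ (2 * (d - p))) / 2.
Proof.
pose W := @vweight R theta k d.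
pose F (e : {ffun vert k d -> bool}) :=
  (\prod_v W v (e v) + \prod_v W v (e v) * \prod_(v in lca_paths) (-1) ^+ e v) / 2.
have agreeE s : (if leaves s a == leaves s b then bjoint theta s else 0) = F (vflip s).
  (* [(x == y)%:R = (1 + (-1) ^+ x * (-1) ^+ y) / 2] *)
  rewrite /F -sign_leaf_pair bjoint_flip !ffunE.
  by case: (s (vleaf a)); case: (s (vleaf b)); rewrite /= ?expr0 ?expr1; lra.
rewrite leafLaw_event big_mkcond /=; under eq_bigr do rewrite agreeE.
have -> : \sum_s F (vflip s) = \sum_e F e.
  by rewrite [RHS](reindex_inj (edge_flip_inj (@vdep_par k d))).
have W_sum v : W v false + W v true = 1.
  by rewrite /W /vweight /bweight; case: ifP => _ /=; field.
have W_bias v : v \in lca_paths -> W v false - W v true = theta.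
  move=> v_in; rewrite /W /vweight (_ : v == vroot k d = false) /bweight /=.
    by field.
  by apply: contraTF v_in => /eqP ->; exact: vroot_notin_lca_paths.
have mass1 : \sum_(e : {ffun vert k d -> bool}) \prod_v W v (e v) = 1.
  by rewrite -bigA_distr_bigA big1 // => v _; rewrite big_bool /= addrC W_sum.
rewrite -mulr_suml big_split /= mass1 (sum_ffun_prod_sign W_sum W_bias).
by rewrite card_lca_paths.
Qed.

End LeafPair.

Lemma exists_split_leaves k d p : (1 < k)%N -> (p < d)%N ->
  exists a b : d.-tuple 'I_k, take p a = take p b /\ take p.+1 a != take p.+1 b.
Proof.
move=> lt1k lt_pd; pose z : 'I_k := Ordinal (ltnW lt1k); pose o : 'I_k := Ordinal lt1k.
have size_b : size (nseq p z ++ o :: nseq (d - p.+1) z) == d.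
  by rewrite size_cat /= !size_nseq addnS -addSn subnKC.
exists (nseq_tuple d z), (Tuple size_b).
rewrite /= take_size_cat ?size_nseq // take_nseq ?(ltnW lt_pd) //; split=> //.
apply/eqP => eq_take; have : o \in take p.+1 (nseq d z).
  by rewrite eq_take take_cat size_nseq ltnNge leqnSn subSnn mem_cat mem_head orbT.
by rewrite take_nseq // mem_nseq => /andP[_ /eqP].
Qed.

Lemma card_agree_on (I : finType) (S : {set I}) (u : {ffun I -> bool}) :
  #|[set w : {ffun I -> bool} | [forall i in S, w i == u i]]| = (2 ^ #|~: S|)%N.
Proof.
pose F i := [pred y : bool | (i \notin S) || (y == u i)].
rewrite (eq_card (B := family F)) => [|w]; last first.
  rewrite !inE; apply/forall_inP/familyP => [agree i | agree i iS].
    by rewrite /F inE; case: (boolP (i \in S)) => //= /agree.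
  by have := agree i; rewrite /F inE iS.
rewrite card_family foldrE big_map big_enum -prod_nat_const [RHS]big_mkcond /=.
apply: eq_bigr => i _; rewrite !inE; case: (i \in S) => /=.
  by rewrite -(card1 (u i)); apply: eq_card.
by rewrite -card_bool; apply: eq_card.
Qed.

Lemma dvdn_card_local (I : finType) (S : {set I}) (P : pred {ffun I -> bool}) :
    (forall w w' : {ffun I -> bool}, {in S, w =1 w'} -> P w = P w') ->
  (2 ^ #|~: S| %| #|[set w | P w]|)%N.
Proof.
move=> P_local.
pose r (w : {ffun I -> bool}) : {ffun I -> bool} := [ffun i => (i \in S) && w i].
have r_agree (w w' : {ffun I -> bool}) : (r w == r w') = [forall i in S, w i == w' i].
  apply/eqP/forall_inP => [eq_r i iS | agree].
    by have := congr1 (fun g : {ffun I -> bool} => g i) eq_r; rewrite !ffunE iS /= => ->.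
  by apply/ffunP => i; rewrite !ffunE; case: (boolP (i \in S)) => //= /agree/eqP ->.
rewrite -sum1dep_card (partition_big r xpredT) //=; apply: dvdn_sum => u _.
case: (pickP [pred w | P w && (r w == u)]) => [w0 /andP[P_w0 /eqP <-] | none]; last first.
  by rewrite big_pred0 ?dvdn0.
pose agree_w0 := [set w : {ffun I -> bool} | [forall i in S, w i == w0 i]].
rewrite (eq_bigl (mem agree_w0)) => [|w].
  by rewrite sum1_card card_agree_on.
rewrite !inE r_agree; apply/andP/idP => [[//]|agree]; split=> //.
move/forall_inP: agree => agree.
by rewrite (P_local w w0) // => i /agree/eqP.
Qed.

Lemma pushLaw_event (R : realType) m (T : finType) (f : {ffun 'I_m -> bool} -> T)
    (E : pred T) :
  \sum_(x | E x) pushLaw R f x = #|[set w | E (f w)]|%:R / 2 ^+ m.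
Proof.
rewrite /pushLaw -mulr_suml -natr_sum -sum1dep_card -(big_fibers _ f).
by congr (_%:R / _); apply: eq_bigr => x _; rewrite sum1dep_card.
Qed.

Lemma pushLaw_local_event (R : realType) m (T : finType) (f : {ffun 'I_m -> bool} -> T)
    (E : pred T) (S : {set 'I_m}) n :
    (#|S| <= n)%N ->
    (forall w w' : {ffun 'I_m -> bool}, {in S, w =1 w'} -> E (f w) = E (f w')) ->
  exists N : nat, \sum_(x | E x) pushLaw R f x = N%:R / 2 ^+ n.
Proof.
move=> le_Sn E_local; have [K cardE] := dvdnP (dvdn_card_local E_local).
exists (K * 2 ^ (n - #|S|))%N; rewrite pushLaw_event cardE.
have le_Sm : (#|S| <= m)%N by apply: leq_trans (max_card _) _; rewrite card_ord.
have card_SC : #|~: S| = (m - #|S|)%N by have := cardsC S; rewrite card_ord; lia.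
have scale s s' : (s <= s')%N -> (2 : R) ^+ (s' - s) / 2 ^+ s' = (2 ^+ s)^-1.
  move=> le_ss'; rewrite -[in 2 ^+ s'](subnK le_ss') exprD invfM mulrA.
  by rewrite mulfV ?mul1r // expf_neq0 ?pnatr_eq0.
by rewrite card_SC !natrM !natrX -!mulrA !scale.
Qed.

Lemma pushLaw_agree_grid (R : realType) m (O : finType) c
    (f : {ffun 'I_m -> bool} -> {ffun O -> bool}) (a b : O) :
    local_c c f ->
  exists N : nat,
    \sum_(x : {ffun O -> bool} | x a == x b) pushLaw R f x = N%:R / 2 ^+ (2 * c).
Proof.
move=> f_local.
have [Sa [card_Sa Sa_f]] := f_local a; have [Sb [card_Sb Sb_f]] := f_local b.
apply: (@pushLaw_local_event _ _ _ _ _ (Sa :|: Sb)); first by rewrite cardsU; lia.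
move=> w w' agree; rewrite (Sa_f w w') ?(Sb_f w w') // => i i_in.
  by apply: agree; rewrite inE i_in orbT.
by apply: agree; rewrite inE i_in.
Qed.

Lemma bernoulli_ineq (R : realDomainType) (r : R) n :
  0 <= r -> 1 + n%:R * r <= (1 + r) ^+ n.
Proof.
move=> r_ge0; elim: n => [|n IHn]; first by rewrite mul0r addr0 expr0.
have nr_ge0 : 0 <= n%:R * r by rewrite mulr_ge0.
rewrite exprSr -natr1; nra.
Qed.

Lemma exists_expr_le (R : archiRealFieldType) (x eps : R) :
  0 < x < 1 -> 0 < eps -> exists n : nat, x ^+ n <= eps.
Proof.
move=> /andP[x_gt0 x_lt1] eps_gt0; pose r := x^-1 - 1.
have r_gt0 : 0 < r by rewrite subr_gt0 invf_gt1.
have epsr_gt0 : 0 < eps * r by rewrite mulr_gt0.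
pose n := Num.bound (eps * r)^-1; exists n.
have n_big : 1 < n%:R * (eps * r).
  by rewrite -ltr_pdivrMr // div1r archi_boundP // invr_ge0 ltW.
have r1 : 1 + r = x^-1 by rewrite addrC subrK.
have xn_gt0 : 0 < x ^+ n by rewrite exprn_gt0.
have nr_gt0 : 0 < n%:R * r.
  by rewrite mulr_gt0 // -(pmulr_lgt0 _ epsr_gt0) (lt_trans ltr01 n_big).
have := bernoulli_ineq n (ltW r_gt0).
by rewrite r1 exprVn -[_ ^- n]div1r ler_pdivlMr //; nra.
Qed.

Lemma far_from_grid (R : realFieldType) (M N : nat) (t : R) :
    (0 < M)%N -> 0 < t -> t * (2 * M%:R) <= 1 ->
  t / 2 <= `|N%:R / M%:R - (1 + t) / 2|.
Proof.
move=> M_gt0 t_gt0 t_small; have M'_gt0 : 0 < M%:R :> R by rewrite ltr0n.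
case: (leqP (2 * N) M) => [|lt_M2N].
  rewrite -(ler_nat R) natrM => le_2NM.
  have : N%:R / M%:R <= 1 / 2 :> R by rewrite ler_pdivrMr //; lra.
  by rewrite distrC => le_half; apply: le_trans (ler_norm _); lra.
have : 1 / 2 + t <= N%:R / M%:R.
  rewrite ler_pdivlMr //; move: lt_M2N.
  by rewrite -addn1 -(ler_nat R) natrD natrM; lra.
by move=> le_y; apply: le_trans (ler_norm _); lra.
Qed.

Lemma tvdist_ge_event (R : realType) (T : finType) (P Q : T -> R) (E : pred T) :
  2^-1 * `|\sum_(x | E x) P x - \sum_(x | E x) Q x| <= tvdist P Q.
Proof.
rewrite /tvdist ler_wpM2l ?invr_ge0 ?ler0n // -sumrB.
apply: le_trans (ler_norm_sum _ _ _) _.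
by rewrite [X in _ <= X](bigID E) /= lerDl sumr_ge0.
Qed.

Unset Implicit Arguments.
Set Strict Implicit.

Theorem mainTheorem11 (R : realType) (k : nat) (theta : R)
    (hk : (2 <= k)%N) (htheta : 0 < theta < 1)
    (c : nat) (m : nat -> nat)
    (f : forall d : nat,
           {ffun 'I_(m d) -> bool} -> {ffun d.-tuple 'I_k -> bool})
    (hf : forall d : nat, local_c c (f d)) :
  exists eps : R, 0 < eps /\ exists D : nat, forall d : nat, (D <= d)%N ->
    eps <= tvdist (@pushLaw R (m d) _ (f d)) (@leafLaw R theta k d).
Proof.
pose M := (2 ^ (2 * c))%N; have M_gt0 : (0 < M)%N by rewrite expn_gt0.
have grid_gt0 : 0 < (2 * M%:R)^-1 :> R by rewrite invr_gt0 mulr_gt0 ?ltr0n.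
have [h theta_h] := exists_expr_le htheta grid_gt0.
pose t := theta ^+ (2 * h.+1).
have t_gt0 : 0 < t by rewrite exprn_gt0 // (andP htheta).1.
have t_small : t * (2 * M%:R) <= 1.
  rewrite -ler_pdivlMr ?mulr_gt0 ?ltr0n // div1r; apply: le_trans theta_h.
  by case/andP: htheta => *; rewrite ler_wiXn2l ?ltW //; lia.
exists (t / 4); split; first by rewrite divr_gt0.
exists h.+1 => d le_hd; have lt_pd : (d - h.+1 < d)%N by lia.
have [a [b [eq_below neq_at]]] := exists_split_leaves hk lt_pd.
have := tvdist_ge_event (@pushLaw R (m d) _ (f d)) (@leafLaw R theta k d)
  (fun x => x a == x b).
have [N ->] := pushLaw_agree_grid R a b (hf d).
rewrite (leafLaw_agree eq_below neq_at) (_ : (d - (d - h.+1))%N = h.+1) -/t; last lia.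
have := far_from_grid N M_gt0 t_gt0 t_small; rewrite /M natrX; lra.
Qed.
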